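(* (a) There is a unique $p_0\in(0,1/2)$ with $\log\left(\frac{1-p_0}{p_0}\right)=\frac{1-p_0}{1-2p_0}$. Moreover, if $0<p\le p_0$ then $\log\left(\frac{1-p}{p}\right)\ge\frac{1-p}{1-2p}$. (b) Given $p\in(0,1)$, there is a unique $s_0\in(0,1)$ with $(1-p)(2-s_0)=\exp(1/s_0)(1-s_0)$. Moreover, if $p>1/2$ then $s_0>2-p^{-1}$, and if $p_0<p\le1/2$ then $s_0>\frac{1-2p}{1-p}$, where $p_0$ is as in (a). *)

From Stdlib Require Export Reals.
Open Scope R_scope.

Definition eq_p0 (p : R) : Prop := ln ((1 - p) / p) = (1 - p) / (1 - 2 * p).

Definition eq_s0 (p s : R) : Prop := (1 - p) * (2 - s) = exp (1 / s) * (1 - s).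

(* Both parts reduce to locating the zero of a continuous strictly increasing
   function.  For (a) this is p |-> (1-p)/(1-2p) - ln((1-p)/p) on (0, 1/2), a sum
   of two increasing functions.  For (b), dividing the equation by
   exp(1/s)(1-s) turns it into Q(s) = 1 with Q(s) = (1-p)(1 + 1/(1-s)) exp(-1/s),
   a product of positive increasing factors; the lower bounds on s0 follow by
   checking Q < 1 at the proposed bound, where Q has a closed form:
   exp(-1/t) at t = 2 - 1/p, and ((1-p)/p) exp(-(1-p)/(1-2p)) at t = (1-2p)/(1-p). *)

From Stdlib Require Import Reals Lra.
Open Scope R_scope.

Section StrictlyIncreasing.

Variables (I : R -> Prop) (h : R -> R).
Hypothesis h_incr : forall x y, I x -> I y -> x < y -> h x < h y.

Lemma strict_incr_inj x y : I x -> I y -> h x = h y -> x = y.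
Proof.
  intros Ix Iy Hxy.
  destruct (Rtotal_order x y) as [Hlt | [Heq | Hgt]]; auto.
  - pose proof (h_incr x y Ix Iy Hlt); lra.
  - pose proof (h_incr y x Iy Ix Hgt); lra.
Qed.

Lemma strict_incr_lt_reflect x y : I x -> I y -> h x < h y -> x < y.
Proof.
  intros Ix Iy Hxy. destruct (Rlt_le_dec x y) as [Hlt | [Hgt | Heq]]; auto.
  - pose proof (h_incr y x Iy Ix Hgt); lra.
  - subst; lra.
Qed.

Lemma strict_incr_le x y : I x -> I y -> x <= y -> h x <= h y.
Proof.
  intros Ix Iy [Hlt | ->]; [left; apply h_incr | right]; auto.
Qed.

End StrictlyIncreasing.

Lemma IVT_open (h : R -> R) a b :
  a < b -> (forall x, a <= x <= b -> continuity_pt h x) ->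
  h a < 0 -> 0 < h b -> exists c, a < c < b /\ h c = 0.
Proof.
  intros Hab Hcont Ha Hb.
  destruct (Ranalysis5.IVT_interv h a b Hcont Hab Ha Hb) as [c [[Hac Hcb] Hc]].
  exists c; split; [split |]; auto.
  - destruct Hac as [Hac | Hac]; [auto | subst; lra].
  - destruct Hcb as [Hcb | Hcb]; [auto | subst; lra].
Qed.

Lemma continuity_pt_ln x : 0 < x -> continuity_pt ln x.
Proof.
  intros Hx. apply derivable_continuous_pt. exists (/ x).
  apply derivable_pt_lim_ln; auto.
Qed.

Lemma exp_2_le_9 : exp 2 <= 9.
Proof.
  replace 2 with (1 + 1) by ring. rewrite exp_plus.
  pose proof exp_le_3. pose proof (exp_pos 1). nra.
Qed.

Definition p0_gap (p : R) : R := (1 - p) / (1 - 2 * p) - ln ((1 - p) / p).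

Lemma eq_p0_iff_gap p : eq_p0 p <-> p0_gap p = 0.
Proof. unfold eq_p0, p0_gap; split; intros; lra. Qed.

Lemma p0_gap_increasing p q :
  0 < p < 1 / 2 -> 0 < q < 1 / 2 -> p < q -> p0_gap p < p0_gap q.
Proof.
  intros Hp Hq Hpq. unfold p0_gap.
  replace ((1 - p) / p) with (/ p - 1) by (field; lra).
  replace ((1 - q) / q) with (/ q - 1) by (field; lra).
  replace ((1 - p) / (1 - 2 * p)) with (/ 2 + / 2 * / (1 - 2 * p)) by (field; lra).
  replace ((1 - q) / (1 - 2 * q)) with (/ 2 + / 2 * / (1 - 2 * q)) by (field; lra).
  assert (/ (1 - 2 * p) < / (1 - 2 * q)) by (apply Rinv_lt_contravar; nra).
  assert (Hinv : / q < / p) by (apply Rinv_lt_contravar; nra).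
  assert (2 < / q).
  { replace 2 with (/ (1 / 2)) by field. apply Rinv_lt_contravar; nra. }
  assert (ln (/ q - 1) < ln (/ p - 1)) by (apply ln_increasing; lra).
  lra.
Qed.

Lemma p0_gap_continuous p : 0 < p < 1 / 2 -> continuity_pt p0_gap p.
Proof.
  intros Hp. unfold p0_gap. apply continuity_pt_minus.
  - reg. lra.
  - apply continuity_pt_comp with (f2 := ln).
    + reg. lra.
    + apply continuity_pt_ln, Rdiv_lt_0_compat; lra.
Qed.

Lemma p0_gap_neg_1_10 : p0_gap (1 / 10) < 0.
Proof.
  unfold p0_gap.
  replace ((1 - 1 / 10) / (1 / 10)) with 9 by field.
  replace ((1 - 1 / 10) / (1 - 2 * (1 / 10))) with (9 / 8) by field.
  assert (exp (9 / 8) < 9).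
  { pose proof exp_2_le_9. assert (exp (9 / 8) < exp 2) by (apply exp_increasing; lra). lra. }
  assert (Hln : ln (exp (9 / 8)) < ln 9) by (apply ln_increasing; [apply exp_pos | auto]).
  rewrite ln_exp in Hln. lra.
Qed.

Lemma p0_gap_pos_2_5 : 0 < p0_gap (2 / 5).
Proof.
  unfold p0_gap.
  replace ((1 - 2 / 5) / (2 / 5)) with (3 / 2) by field.
  replace ((1 - 2 / 5) / (1 - 2 * (2 / 5))) with 3 by field.
  assert (1 + 3 < exp 3) by (apply exp_ineq1; lra).
  assert (Hln : ln (3 / 2) < ln (exp 3)) by (apply ln_increasing; lra).
  rewrite ln_exp in Hln. lra.
Qed.

Lemma p0_gap_root : exists p0, 0 < p0 < 1 / 2 /\ p0_gap p0 = 0.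
Proof.
  destruct (IVT_open p0_gap (1 / 10) (2 / 5)) as [p0 [Hp0 Hgap]].
  - lra.
  - intros x Hx. apply p0_gap_continuous. lra.
  - exact p0_gap_neg_1_10.
  - exact p0_gap_pos_2_5.
  - exists p0. split; [lra | auto].
Qed.

Definition s0_ratio (p s : R) : R := (1 - p) * (1 + / (1 - s)) * exp (- / s).

Lemma s0_ratio_quotient p s :
  0 < s < 1 -> s0_ratio p s = (1 - p) * (2 - s) / (exp (1 / s) * (1 - s)).
Proof.
  intros Hs. unfold s0_ratio. rewrite exp_Ropp.
  pose proof (exp_pos (/ s)). replace (1 / s) with (/ s) by (field; lra).
  field. split; lra.
Qed.

Lemma eq_s0_iff_ratio p s : 0 < s < 1 -> eq_s0 p s <-> s0_ratio p s = 1.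
Proof.
  intros Hs. rewrite s0_ratio_quotient by auto. unfold eq_s0.
  pose proof (exp_pos (1 / s)). assert (0 < exp (1 / s) * (1 - s)) by nra.
  split; intros E.
  - rewrite E. field. lra.
  - apply (Rmult_eq_reg_r (/ (exp (1 / s) * (1 - s)))).
    + rewrite Rinv_r by lra. exact E.
    + apply Rgt_not_eq, Rinv_0_lt_compat. auto.
Qed.

Lemma s0_ratio_increasing p s t :
  p < 1 -> 0 < s < 1 -> 0 < t < 1 -> s < t -> s0_ratio p s < s0_ratio p t.
Proof.
  intros Hp Hs Ht Hst. unfold s0_ratio. rewrite !Rmult_assoc.
  apply Rmult_lt_compat_l; [lra |].
  assert (0 < / (1 - s)) by (apply Rinv_0_lt_compat; lra).
  assert (/ (1 - s) < / (1 - t)) by (apply Rinv_lt_contravar; nra).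
  assert (/ t < / s) by (apply Rinv_lt_contravar; nra).
  assert (exp (- / s) < exp (- / t)) by (apply exp_increasing; lra).
  pose proof (exp_pos (- / s)).
  apply Rmult_le_0_lt_compat; lra.
Qed.

Lemma s0_ratio_lt_1_half p : 0 < p < 1 -> s0_ratio p (1 / 2) < 1.
Proof.
  intros Hp. unfold s0_ratio.
  replace (/ (1 / 2)) with 2 by field. rewrite exp_Ropp.
  replace (1 + / (1 - 1 / 2)) with 3 by field.
  assert (1 + 2 < exp 2) by (apply exp_ineq1; lra).
  assert (0 < / exp 2) by (apply Rinv_0_lt_compat, exp_pos).
  assert (/ exp 2 < / 3) by (apply Rinv_lt_contravar; lra).
  nra.
Qed.

(* Near 1 the factor 1/(1-s) dominates: at s = 1 - (1-p)/100 the ratio is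
   (101 - p) exp(-1/s) > 100 exp(-2). *)
Lemma s0_ratio_gt_1_near_1 p :
  0 < p < 1 -> 1 < s0_ratio p (1 - (1 - p) / 100).
Proof.
  intros Hp. set (b := 1 - (1 - p) / 100). unfold s0_ratio.
  replace ((1 - p) * (1 + / (1 - b))) with (101 - p) by (unfold b; field; lra).
  assert (Hb : / b < 2)
    by (replace 2 with (/ (1 / 2)) by field; apply Rinv_lt_contravar; unfold b; lra).
  assert (exp (/ b) < 9) by (pose proof exp_2_le_9; pose proof (exp_increasing _ _ Hb); lra).
  rewrite exp_Ropp.
  assert (/ 9 < / exp (/ b)) by (apply Rinv_lt_contravar; [pose proof (exp_pos (/ b)); nra | auto]).
  nra.
Qed.

Lemma s0_ratio_root p : 0 < p < 1 -> exists s0, 0 < s0 < 1 /\ s0_ratio p s0 = 1.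
Proof.
  intros Hp.
  destruct (IVT_open (fun s => s0_ratio p s - 1) (1 / 2) (1 - (1 - p) / 100))
    as [s0 [Hs0 Hroot]].
  - lra.
  - intros x Hx. unfold s0_ratio. reg; lra.
  - pose proof (s0_ratio_lt_1_half p Hp). lra.
  - pose proof (s0_ratio_gt_1_near_1 p Hp). lra.
  - exists s0. split; lra.
Qed.

Lemma s0_ratio_lt_reflect_root p s0 t :
  p < 1 -> 0 < s0 < 1 -> s0_ratio p s0 = 1 ->
  0 < t < 1 -> s0_ratio p t < 1 -> t < s0.
Proof.
  intros Hp Hs0 Hroot Ht Hlt.
  apply (strict_incr_lt_reflect (fun s => 0 < s < 1) (s0_ratio p)); auto.
  - intros x y Hx Hy. apply s0_ratio_increasing; auto.
  - lra.
Qed.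

Lemma two_sub_inv_in_01 p : 1 / 2 < p < 1 -> 0 < 2 - / p < 1.
Proof.
  intros Hp.
  assert (/ p < 2) by (replace 2 with (/ (1 / 2)) by field; apply Rinv_lt_contravar; lra).
  assert (1 < / p) by (rewrite <- Rinv_1; apply Rinv_lt_contravar; lra).
  lra.
Qed.

Lemma lower_bound_in_01 p : 0 < p < 1 / 2 -> 0 < (1 - 2 * p) / (1 - p) < 1.
Proof.
  intros Hp. split; [apply Rdiv_lt_0_compat; lra |].
  apply (Rmult_lt_reg_r (1 - p)); [lra |].
  unfold Rdiv. rewrite Rmult_assoc, Rinv_l by lra. lra.
Qed.

Lemma s0_ratio_at_2_sub_inv p : 1 / 2 < p < 1 -> s0_ratio p (2 - / p) = exp (- / (2 - / p)).
Proof.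
  intros Hp. unfold s0_ratio.
  replace ((1 - p) * (1 + / (1 - (2 - / p)))) with 1 by (field; lra). ring.
Qed.

Lemma s0_ratio_at_lower_bound p :
  0 < p < 1 / 2 ->
  s0_ratio p ((1 - 2 * p) / (1 - p)) = (1 - p) / p * exp (- ((1 - p) / (1 - 2 * p))).
Proof.
  intros Hp. unfold s0_ratio.
  replace ((1 - p) * (1 + / (1 - (1 - 2 * p) / (1 - p)))) with ((1 - p) / p) by (field; lra).
  replace (/ ((1 - 2 * p) / (1 - p))) with ((1 - p) / (1 - 2 * p)) by (field; lra).
  reflexivity.
Qed.

Lemma s0_ratio_lt_1_at_2_sub_inv p : 1 / 2 < p < 1 -> s0_ratio p (2 - / p) < 1.
Proof.
  intros Hp. rewrite s0_ratio_at_2_sub_inv by auto. rewrite <- exp_0.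
  apply exp_increasing.
  pose proof (two_sub_inv_in_01 p Hp).
  assert (0 < / (2 - / p)) by (apply Rinv_0_lt_compat; lra).
  lra.
Qed.

(* At t = (1-2p)/(1-p), the inequality s0_ratio p t < 1 is exactly p0_gap p > 0. *)
Lemma s0_ratio_lt_1_at_lower_bound p :
  0 < p < 1 / 2 -> 0 < p0_gap p -> s0_ratio p ((1 - 2 * p) / (1 - p)) < 1.
Proof.
  intros Hp Hgap. rewrite s0_ratio_at_lower_bound by auto. unfold p0_gap in Hgap.
  assert (Hpos : 0 < (1 - p) / p) by (apply Rdiv_lt_0_compat; lra).
  rewrite <- (exp_ln ((1 - p) / p)) at 1 by auto.
  rewrite <- exp_plus.
  set (x := ln ((1 - p) / p) + - ((1 - p) / (1 - 2 * p))).
  rewrite <- exp_0. apply exp_increasing. unfold x. lra.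
Qed.

Theorem lemma16 :
  exists p0 : R,
    ((0 < p0 < 1 / 2 /\ eq_p0 p0) /\
     (forall q : R, 0 < q < 1 / 2 -> eq_p0 q -> q = p0)) /\
    (forall p : R, 0 < p <= p0 -> ln ((1 - p) / p) >= (1 - p) / (1 - 2 * p)) /\
    (forall p : R, 0 < p < 1 ->
       exists s0 : R,
         ((0 < s0 < 1 /\ eq_s0 p s0) /\
          (forall s : R, 0 < s < 1 -> eq_s0 p s -> s = s0)) /\
         (p > 1 / 2 -> s0 > 2 - / p) /\
         (p0 < p <= 1 / 2 -> s0 > (1 - 2 * p) / (1 - p))).
Proof.
  destruct p0_gap_root as [p0 [Hp0 Hgap0]].
  assert (Hincr := p0_gap_increasing).
  exists p0. split; [split | split].
  - split; [auto | apply eq_p0_iff_gap; auto].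
  - intros q Hq Eq. apply eq_p0_iff_gap in Eq.
    apply (strict_incr_inj (fun p => 0 < p < 1 / 2) p0_gap Hincr); auto. lra.
  - intros p Hp.
    assert (Hle : p0_gap p <= p0_gap p0)
      by (apply (strict_incr_le (fun p => 0 < p < 1 / 2)); auto; lra).
    rewrite Hgap0 in Hle. unfold p0_gap in Hle. lra.
  - intros p Hp.
    destruct (s0_ratio_root p Hp) as [s0 [Hs0 Hroot]].
    exists s0. split; [split | split].
    + split; [auto | apply eq_s0_iff_ratio; auto].
    + intros s Hs Es. apply eq_s0_iff_ratio in Es; auto.
      apply (strict_incr_inj (fun s => 0 < s < 1) (s0_ratio p)); try lra.
      intros x y Hx Hy. apply s0_ratio_increasing; lra.
    + intros Hp2. apply Rlt_gt, (s0_ratio_lt_reflect_root p); try lra.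
      * apply two_sub_inv_in_01; lra.
      * apply s0_ratio_lt_1_at_2_sub_inv; lra.
    + intros [Hp0p [Hlt | ->]].
      * assert (Hgap : 0 < p0_gap p) by (rewrite <- Hgap0; apply Hincr; lra).
        apply Rlt_gt, (s0_ratio_lt_reflect_root p); try lra.
        -- apply lower_bound_in_01; lra.
        -- apply s0_ratio_lt_1_at_lower_bound; auto; lra.
      * replace ((1 - 2 * (1 / 2)) / (1 - 1 / 2)) with 0 by field. lra.
Qed.
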